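(* Let $\mathcal{D}$ be a set of discounting functions. For every $\mathrm{LTL}^{\mathrm{disc}}[\mathcal{D}]$ formula $\varphi$ over $AP$ and every threshold $v\in[0,1]$, there exists an alternating weak automaton $\mathcal{A}_{\varphi,v}$ over the alphabet $2^{AP}$ such that for every computation $\pi$: (1) if $[\![\pi,\varphi]\!]>v$, then $\mathcal{A}_{\varphi,v}$ accepts $\pi$; (2) if $\mathcal{A}_{\varphi,v}$ accepts $\pi$ and $\pi$ is a lasso computation, then $[\![\pi,\varphi]\!]>v$.
   Context: Let $AP$ be a finite set of atomic propositions. A computation is an infinite word $\pi=\pi_0\pi_1\cdots\in(2^{AP})^\omega$, $\pi^i=\pi_i\pi_{i+1}\cdots$; a lasso computation is one of the form $u\cdot w^\omega$ with $u,w\in(2^{AP})^*$, $w\neq\epsilon$. A discounting function is a strictly decreasing $\eta:\mathbb{N}\to[0,1]$ with $\lim_{i\to\infty}\eta(i)=0$. $\mathrm{LTL}^{\mathrm{disc}}[\mathcal{D}]$ formulas: $\varphi ::= \mathtt{True}\mid p\mid\neg\varphi\mid\varphi\vee\varphi\mid\mathsf{X}\varphi\mid\varphi\,\mathsf{U}\,\varphi\mid\varphi\,\mathsf{U}_\eta\,\varphi$ ($p\in AP$, $\eta\in\mathcal{D}$), with values: $[\![\pi,\mathtt{True}]\!]=1$; $[\![\pi,p]\!]=1$ if $p\in\pi_0$, else $0$; $[\![\pi,\neg\varphi]\!]=1-[\![\pi,\varphi]\!]$; $[\![\pi,\varphi\vee\psi]\!]=\max\{[\![\pi,\varphi]\!],[\![\pi,\psi]\!]\}$;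 $[\![\pi,\mathsf{X}\varphi]\!]=[\![\pi^1,\varphi]\!]$; $[\![\pi,\varphi\,\mathsf{U}\,\psi]\!]=\sup_{i\ge0}\min\{[\![\pi^i,\psi]\!],\min_{0\le j<i}[\![\pi^j,\varphi]\!]\}$; $[\![\pi,\varphi\,\mathsf{U}_\eta\,\psi]\!]=\sup_{i\ge0}\min\{\eta(i)[\![\pi^i,\psi]\!],\min_{0\le j<i}\eta(j)[\![\pi^j,\varphi]\!]\}$. An alternating B\''uchi automaton is $\mathcal{A}=\langle\Sigma,Q,q_{in},\delta,\alpha\rangle$ with finite alphabet $\Sigma$, finite state set $Q$, initial state $q_{in}$, transition function $\delta:Q\times\Sigma\to\mathcal{B}^+(Q)$ (positive Boolean formulas over $Q$, including $\mathtt{True},\mathtt{False}$) and accepting set $\alpha\subseteq Q$. A run on $w=\sigma_0\sigma_1\cdots$ is a DAG with nodes in $Q\times\mathbb{N}$, level $0$ being $\{q_{in}\}$, such that for each node $\langle q,l\rangle$ the set of its successors at level $l+1$ satisfies $\delta(q,\sigma_l)$; it is accepting if every infinite path visits $\alpha$ infinitely often, and $w$ is accepted if some run is accepting. The automaton is weak if $Q$ can be partitioned into sets $Q_1,\dots,Q_k$, each contained in or disjoint from $\alpha$, with a partial order on them such that transitions from a state in $Q_i$ only lead to states in sets $Q_j\le Q_i$. *)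

From HB Require Import structures.
From mathcomp Require Import all_boot all_order all_algebra.
From mathcomp Require Import boolp classical_sets reals.
Set Implicit Arguments. Unset Strict Implicit. Unset Printing Implicit Defensive.
Import Order.TTheory GRing.Theory Num.Theory.
Local Open Scope ring_scope.


Definition discounting (R : realType) (eta : nat -> R) : Prop :=
  (forall i, 0 <= eta i <= 1) /\
  (forall i j : nat, (i < j)%N -> eta j < eta i) /\
  (forall e : R, 0 < e -> exists N : nat, forall n : nat, (N <= n)%N -> `|eta n| < e).

Inductive ltl (R : realType) (AP : Type) : Type :=
| LTrue : ltl R AP
| LAtom : AP -> ltl R AP
| LNot : ltl R AP -> ltl R AP
| LOr : ltl R AP -> ltl R AP -> ltl R AP
| LNext : ltl R AP -> ltl R AP
| LUntil : ltl R AP -> ltl R AP -> ltl R AP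
| LUntilD : (nat -> R) -> ltl R AP -> ltl R AP -> ltl R AP.

Fixpoint in_disc (R : realType) (AP : Type) (D : set (nat -> R)) (phi : ltl R AP)
  : Prop :=
  match phi with
  | LTrue => True
  | LAtom _ => True
  | LNot f => in_disc D f
  | LOr f g => in_disc D f /\ in_disc D g
  | LNext f => in_disc D f
  | LUntil f g => in_disc D f /\ in_disc D g
  | LUntilD eta f g => D eta /\ in_disc D f /\ in_disc D g
  end.

Definition computation (AP : finType) := nat -> {set AP}.
Definition suffix (AP : finType) (pi : computation AP) (i : nat) : computation AP :=
  fun n => pi (i + n)%N.

(** Minimum over j < i; the empty minimum is 1 (all values lie in [0,1],
    so this is the same as imposing no constraint). *)
Definition minj (R : realType) (i : nat) (F : nat -> R) : R :=
  \big[Order.min/1]_(j < i) F j.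

Fixpoint value (R : realType) (AP : finType) (phi : ltl R AP) (pi : computation AP) : R :=
  match phi with
  | LTrue => 1
  | LAtom p => if p \in pi 0%N then 1 else 0
  | LNot f => 1 - value f pi
  | LOr f g => Num.max (value f pi) (value g pi)
  | LNext f => value f (suffix pi 1)
  | LUntil f g =>
      sup (range (fun i : nat =>
        Order.min (value g (suffix pi i))
                  (minj i (fun j => value f (suffix pi j)))))
  | LUntilD eta f g =>
      sup (range (fun i : nat =>
        Order.min (eta i * value g (suffix pi i))
                  (minj i (fun j => eta j * value f (suffix pi j)))))
  end.

Definition lasso (AP : finType) (pi : computation AP) : Prop :=
  exists (u w : seq {set AP}), w <> [::] /\
    forall n : nat, pi n = if (n < size u)%N then nth finset.set0 u n
                           else nth finset.set0 w ((n - size u) %% size w).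

Inductive pbf (Q : Type) : Type :=
| PTrue : pbf Q
| PFalse : pbf Q
| PAtom : Q -> pbf Q
| PAnd : pbf Q -> pbf Q -> pbf Q
| POr : pbf Q -> pbf Q -> pbf Q.

Fixpoint pbf_sat (Q : finType) (S : {set Q}) (b : pbf Q) : Prop :=
  match b with
  | PTrue => True
  | PFalse => False
  | PAtom q => q \in S
  | PAnd b1 b2 => pbf_sat S b1 /\ pbf_sat S b2
  | POr b1 b2 => pbf_sat S b1 \/ pbf_sat S b2
  end.

Fixpoint pbf_atoms (Q : Type) (b : pbf Q) (q : Q) : Prop :=
  match b with
  | PTrue => False
  | PFalse => False
  | PAtom q' => q = q'
  | PAnd b1 b2 => pbf_atoms b1 q \/ pbf_atoms b2 q
  | POr b1 b2 => pbf_atoms b1 q \/ pbf_atoms b2 q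
  end.

Record aba (Sigma Q : finType) := ABA {
  q_in : Q;
  delta : Q -> Sigma -> pbf Q;
  acc : {set Q}
}.

(** A run DAG on word w: level l has node set lvl l (lvl 0 = {q_in});
    succ l q is the set of successors at level l+1 of node <q,l>; the nodes
    of level l+1 are exactly the successors of nodes of level l; for every
    node <q,l> the successor set satisfies delta(q, w_l). *)
Definition is_run (Sigma Q : finType) (A : aba Sigma Q) (w : nat -> Sigma)
  (lvl : nat -> {set Q}) (succ : nat -> Q -> {set Q}) : Prop :=
  lvl 0%N = [set q_in A] /\
  (forall l : nat, lvl l.+1 = \bigcup_(q in lvl l) succ l q) /\
  (forall (l : nat) (q : Q), q \in lvl l -> pbf_sat (succ l q) (delta A q (w l))).

Definition run_accepting (Sigma Q : finType) (A : aba Sigma Q)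
  (succ : nat -> Q -> {set Q}) : Prop :=
  forall p : nat -> Q, p 0%N = q_in A -> (forall l, p l.+1 \in succ l (p l)) ->
    forall N : nat, exists l : nat, (N <= l)%N /\ p l \in acc A.

Definition accepts (Sigma Q : finType) (A : aba Sigma Q) (w : nat -> Sigma) : Prop :=
  exists lvl succ, is_run A w lvl succ /\ run_accepting A succ.

(** Weakness: a partition of Q into blocks Q_1..Q_k (block : Q -> 'I_k), each
    contained in or disjoint from acc, with a partial order le on blocks such
    that transitions from a block only lead to blocks below or equal to it. *)
Definition weak (Sigma Q : finType) (A : aba Sigma Q) : Prop :=
  exists (k : nat) (block : Q -> 'I_k) (le : 'I_k -> 'I_k -> Prop),
    (forall i, le i i) /\
    (forall i j, le i j -> le j i -> i = j) /\
    (forall i j m, le i j -> le j m -> le i m) /\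
    (forall i : 'I_k, [set q | block q == i] \subset acc A \/
                      [disjoint [set q | block q == i] & acc A]) /\
    (forall (q : Q) (s : Sigma) (q' : Q), pbf_atoms (delta A q s) q' ->
       le (block q') (block q)).

(* For every formula and threshold, both [v < [[phi]]] and [[[phi]] < v] are
   accepted by weak automata that accept every word of the language and accept
   no lasso word outside it; they are built by induction on [phi].  Negation
   swaps the two kinds of threshold, disjunction and next are direct, and the
   thresholds of an undiscounted until are until and release combinations of
   those of its arguments: on a lasso word only finitely many suffixes occur,
   so the supremum defining the value is attained and a strict bound on every
   term is a strict bound on the supremum.  For [v > 0], a discounted until
   involves only the finitely many positions [i] with [v <= eta i], since
   later terms are bounded by [eta i]; it becomes a finite Boolean combination
   of the thresholds [v / eta i] of its arguments.  Each automaton comes with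
   languages for its states and a rank that decreases along every transition
   except self-loops, which makes it weak. *)

From HB Require Import structures.
From mathcomp Require Import all_boot all_order all_algebra.
From mathcomp Require Import boolp classical_sets reals.
From mathcomp Require Import zify lra.
Import Order.TTheory GRing.Theory Num.Theory.
Set Implicit Arguments. Unset Strict Implicit. Unset Printing Implicit Defensive.

Fixpoint pbf_map (Q Q' : Type) (f : Q -> Q') (b : pbf Q) : pbf Q' :=
  match b with
  | PTrue => PTrue _
  | PFalse => PFalse _
  | PAtom q => PAtom (f q)
  | PAnd b1 b2 => PAnd (pbf_map f b1) (pbf_map f b2)
  | POr b1 b2 => POr (pbf_map f b1) (pbf_map f b2)
  end.

Section PositiveBooleanFormulas.
Variable Q : finType.

Lemma pbf_sat_subset (S S' : {set Q}) (b : pbf Q) :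
  S \subset S' -> pbf_sat S b -> pbf_sat S' b.
Proof.
move=> sSS'; elim: b => //= [q|b1 IH1 b2 IH2|b1 IH1 b2 IH2].
- exact: (fintype.subsetP sSS').
- by case=> h1 h2; split; [apply: IH1|apply: IH2].
- by case=> [h1|h2]; [left; apply: IH1|right; apply: IH2].
Qed.

Lemma pbf_sat_atoms (S : {set Q}) (b : pbf Q) :
  pbf_sat S b -> pbf_sat [set q in S | `[< pbf_atoms b q >]] b.
Proof.
have widen (b' : pbf Q) (P : Q -> Prop) : (forall q, pbf_atoms b' q -> P q) ->
    pbf_sat [set q in S | `[< pbf_atoms b' q >]] b' ->
    pbf_sat [set q in S | `[< P q >]] b'.
  move=> b'P; apply: pbf_sat_subset; apply/fintype.subsetP => q.
  by rewrite !inE => /andP[-> /asboolP/b'P/asboolP].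
elim: b => //= [q qS|b1 IH1 b2 IH2|b1 IH1 b2 IH2].
- by rewrite inE qS; apply/asboolP.
- case=> /IH1 h1 /IH2 h2; split.
    + by apply: widen h1 => q; left.
    + by apply: widen h2 => q; right.
- by case=> [/IH1|/IH2] h; [left|right]; apply: widen h => q; [left|right].
Qed.

Variables (Q' : finType) (f : Q -> Q').

Lemma pbf_sat_map (S : {set Q'}) (b : pbf Q) :
  pbf_sat S (pbf_map f b) <-> pbf_sat (f @^-1: S) b.
Proof.
elim: b => //= [q|b1 IH1 b2 IH2|b1 IH1 b2 IH2]; first by rewrite inE.
- by rewrite IH1 IH2.
- by rewrite IH1 IH2.
Qed.

Lemma pbf_atoms_map (b : pbf Q) (q : Q) :
  pbf_atoms b q -> pbf_atoms (pbf_map f b) (f q).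
Proof.
elim: b => //= [q' ->|b1 IH1 b2 IH2|b1 IH1 b2 IH2] //.
- by case=> [/IH1|/IH2]; [left|right].
- by case=> [/IH1|/IH2]; [left|right].
Qed.

Lemma pbf_atoms_mapP (b : pbf Q) (q' : Q') :
  pbf_atoms (pbf_map f b) q' -> exists2 q, q' = f q & pbf_atoms b q.
Proof.
elim: b => //= [q ->|b1 IH1 b2 IH2|b1 IH1 b2 IH2]; first by exists q.
- by case=> [/IH1|/IH2] [q -> h]; exists q => //; [left|right].
- by case=> [/IH1|/IH2] [q -> h]; exists q => //; [left|right].
Qed.

End PositiveBooleanFormulas.

Section Words.
Variable AP : finType.
Implicit Types pi : computation AP.

Lemma suffix0 pi : suffix pi 0 = pi.
Proof. by apply: funext => n; rewrite /suffix add0n. Qed.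

Lemma suffixD pi a b : suffix (suffix pi a) b = suffix pi (a + b).
Proof. by apply: funext => n; rewrite /suffix addnA. Qed.

Lemma suffix_head pi i : suffix pi i 0 = pi i.
Proof. by rewrite /suffix addn0. Qed.

Lemma suffixS pi i : suffix (suffix pi i) 1 = suffix pi i.+1.
Proof. by rewrite suffixD addn1. Qed.

Definition eventually_periodic pi : Prop :=
  exists K p, (0 < p)%N /\ forall n, (K <= n)%N -> pi (n + p)%N = pi n.

Lemma eventually_periodic_suffix pi i :
  eventually_periodic pi -> eventually_periodic (suffix pi i).
Proof.
case=> K [p [p_gt0 per]]; exists K, p; split=> // n Kn.
by rewrite /suffix addnA per // (leq_trans Kn (leq_addl _ _)).
Qed.

Lemma lasso_eventually_periodic pi : lasso pi -> eventually_periodic pi.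
Proof.
case=> u [w [w_neq0 pi_uw]]; exists (size u), (size w); split; first by case: w w_neq0 pi_uw.
move=> n un; rewrite !pi_uw.
have -> : (n + size w < size u)%N = false by lia.
have -> : (n < size u)%N = false by lia.
have -> : (n + size w - size u = (n - size u) + size w)%N by lia.
by rewrite modnDr.
Qed.

Lemma eventually_periodic_suffixes pi : eventually_periodic pi ->
  exists K, forall i, exists i', [/\ (i' < K)%N, (i' <= i)%N & suffix pi i = suffix pi i'].
Proof.
case=> K [p [p_gt0 per]]; exists (K + p)%N; elim/ltn_ind => i IH.
case: (ltnP i (K + p)) => iKp; first by exists i.
have [|i' [i'K i'i eq_i']] := IH (i - p)%N; first by lia.
exists i'; split=> //; first by lia.
rewrite -eq_i'; apply: funext => n; rewrite /suffix.
have -> : (i + n = (i - p + n) + p)%N by lia.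
by rewrite per //; lia.
Qed.

End Words.

Lemma no_infinite_descent (f : nat -> nat) : ~ (forall k, (f k.+1 < f k)%N).
Proof.
move=> desc; have bound k : (f k + k <= f 0%N)%N.
  by elim: k => [|k IH]; [rewrite addn0|have := desc k; lia].
by have := bound (f 0%N).+1; lia.
Qed.

Lemma rank_stabilizes (T : Type) (p : nat -> T) (rank : T -> nat) :
  (forall l, p l.+1 = p l \/ (rank (p l.+1) < rank (p l))%N) ->
  exists L, forall k, p (L + k)%N = p L.
Proof.
move=> step.
have drift L k : p (L + k)%N = p L \/ (rank (p (L + k)%N) < rank (p L))%N.
  elim: k => [|k IH]; first by rewrite addn0; left.
  rewrite addnS; case: (step (L + k)%N) => [->|lt] //.
  by right; case: IH => [<- //|]; apply: ltn_trans.
suff: forall n L, (rank (p L) < n)%N -> exists L', forall k, p (L' + k)%N = p L'.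
  by move/(_ _ 0%N (ltnSn _)).
elim=> [|n IH] L rank_lt; first by [].
case: (pselect (forall k, p (L + k)%N = p L)) => [|/existsNP [k moved]]; first by exists L.
have [//|lt] := drift L k.
by apply: (IH (L + k)%N); apply: leq_trans lt rank_lt.
Qed.

Section Certificate.
Variables (AP Q : finType) (A : aba {set AP} Q).
Variables (lang : Q -> computation AP -> Prop) (rank : Q -> nat).
Variable progress : Q -> computation AP -> nat.

(* [lang q] is the language of state [q]: exact on eventually periodic words,
   an under-approximation in general.  Ranks strictly decrease except along
   self-loops, which makes the automaton weak; [progress] forbids staying forever
   in a rejecting state.  A rejecting state reads [lang q] as a least fixpoint
   ([lang_rejecting]), an accepting one as a greatest fixpoint
   ([lang_accepting], a coinduction principle for self-loops). *)
Record certified_at (q : Q) : Prop := CertifiedAt {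
  rank_step : forall s q', pbf_atoms (delta A q s) q' -> q' = q \/ (rank q' < rank q)%N;
  lang_step : forall pi, lang q pi -> exists S, pbf_sat S (delta A q (pi 0%N)) /\
    forall q', q' \in S -> lang q' (suffix pi 1) /\
      (q' = q -> q \notin acc A -> (progress q (suffix pi 1) < progress q pi)%N);
  lang_rejecting : q \notin acc A -> forall pi S, eventually_periodic pi ->
    pbf_sat S (delta A q (pi 0%N)) ->
    (forall q', q' \in S -> pbf_atoms (delta A q (pi 0%N)) q' -> lang q' (suffix pi 1)) ->
    lang q pi;
  lang_accepting : q \in acc A -> forall pi (X : nat -> Prop), eventually_periodic pi ->
    (forall l, X l -> exists S, pbf_sat S (delta A q (pi l)) /\
      forall q', q' \in S -> pbf_atoms (delta A q (pi l)) q' ->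
        (q' = q -> X l.+1) /\ (q' <> q -> lang q' (suffix pi l.+1))) ->
    X 0%N -> lang q pi
}.

Definition certified : Prop := forall q, certified_at q.

Fixpoint run_levels (succ : nat -> Q -> {set Q}) (l : nat) : {set Q} :=
  if l is l'.+1 then \bigcup_(q in run_levels succ l') succ l' q else [set q_in A].

Lemma run_path (w : nat -> {set AP}) lvl succ : is_run A w lvl succ ->
  forall l q, q \in lvl l -> exists p : nat -> Q,
    [/\ p 0%N = q_in A, p l = q & forall k, (k < l)%N -> p k.+1 \in succ k (p k)].
Proof.
case=> lvl0 [lvlS _]; elim=> [|l IH] q.
  by rewrite lvl0 => /set1P ->; exists (fun _ => q_in A).
rewrite lvlS => /bigcupP [q0 /IH [p [p0 pl p_succ]] q_succ].
exists (fun k => if (k <= l)%N then p k else q); split; rewrite ?leq0n ?ltnn //.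
move=> k; rewrite ltnS => kl; rewrite kl; case: ltngtP kl => // [lt|->] _.
- exact: p_succ.
- by rewrite pl.
Qed.

Lemma run_rejecting_loop_exits (w : nat -> {set AP}) lvl succ l q :
  is_run A w lvl succ -> run_accepting A succ -> q \in lvl l -> q \notin acc A ->
  exists k, q \notin succ (l + k)%N q.
Proof.
move=> run accepting ql q_rej; apply: contrapT => /forallNP stays.
have loop k : q \in succ (l + k)%N q by apply/negPn/negP; apply: stays.
have [p [p0 pl p_succ]] := run_path run ql.
pose p' k := if (k <= l)%N then p k else q.
have p'_succ k : p' k.+1 \in succ k (p' k).
  rewrite /p'; case: (ssrnat.ltngtP k l) => [lt|gt|->].
  - exact: p_succ.
  - by have := loop (k - l)%N; rewrite subnKC // ltnW.
  - by rewrite pl; have := loop 0%N; rewrite addn0.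
have [|l' [ll' acc_l']] := accepting p' _ p'_succ l; first by rewrite /p' leq0n.
move: acc_l'; rewrite /p'; case: ifP => [l'l|_]; last by rewrite (negPf q_rej).
have -> : l' = l by apply/eqP; rewrite eqn_leq l'l ll'.
by rewrite pl (negPf q_rej).
Qed.

Hypothesis cert : certified.

Lemma certified_back q pi S : eventually_periodic pi -> pbf_sat S (delta A q (pi 0%N)) ->
  (forall q', q' \in S -> pbf_atoms (delta A q (pi 0%N)) q' -> lang q' (suffix pi 1)) ->
  lang q pi.
Proof.
move=> per sat S_lang; have [_ step rej accept] := cert q.
case: (boolP (q \in acc A)) => [q_acc|q_rej]; last exact: rej q_rej pi S per sat S_lang.
apply: (accept q_acc pi (fun l => l = 0%N \/ lang q (suffix pi l))) => //; last by left.
move=> l [->|ql].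
  exists S; split=> // q' q'S at_q'; split; last by move=> _; apply: S_lang.
  by move=> eq_q'; right; rewrite -eq_q'; apply: S_lang.
have [S' [sat' S'_lang]] := step _ ql; rewrite suffix_head in sat'.
exists S'; split=> // q' q'S' _; have [q'_lang _] := S'_lang q' q'S'.
rewrite suffixS in q'_lang; split=> // eq_q'; right; by rewrite -eq_q'.
Qed.

Lemma certified_successors pi : exists succ : nat -> Q -> {set Q},
  forall l q, lang q (suffix pi l) ->
    pbf_sat (succ l q) (delta A q (pi l)) /\ forall q', q' \in succ l q ->
      [/\ pbf_atoms (delta A q (pi l)) q', lang q' (suffix pi l.+1) &
          q' = q -> q \notin acc A ->
          (progress q (suffix pi l.+1) < progress q (suffix pi l))%N].
Proof.
have choose l q : exists S : {set Q}, lang q (suffix pi l) ->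
    pbf_sat S (delta A q (pi l)) /\ forall q', q' \in S ->
      [/\ pbf_atoms (delta A q (pi l)) q', lang q' (suffix pi l.+1) &
          q' = q -> q \notin acc A ->
          (progress q (suffix pi l.+1) < progress q (suffix pi l))%N].
  case: (pselect (lang q (suffix pi l))) => [ql|]; last by exists finset.set0.
  have [S [sat S_lang]] := lang_step (cert q) ql; rewrite suffix_head in sat.
  exists [set q' in S | `[< pbf_atoms (delta A q (pi l)) q' >]] => _.
  split; first exact: pbf_sat_atoms.
  move=> q'; rewrite inE => /andP [q'S /asboolP at_q'].
  by have [] := S_lang q' q'S; rewrite suffixS.
exists (fun l q => sval (cid (choose l q))) => l q; exact: svalP (cid (choose l q)).
Qed.

Lemma certified_accepts pi : lang (q_in A) pi -> accepts A pi.
Proof.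
move=> lang_in; have [succ succP] := certified_successors pi.
have lvl_lang l q : q \in run_levels succ l -> lang q (suffix pi l).
  elim: l q => [|l IH] q /=; first by rewrite inE => /eqP ->; rewrite suffix0.
  by case/bigcupP => q0 /IH /succP [_ q0_succ] /q0_succ [].
exists (run_levels succ), succ; split.
  by split=> //; split=> // l q /lvl_lang /succP [].
move=> p p0 p_succ N; apply: contrapT => /forallNP never_acc.
have p_lvl l : p l \in run_levels succ l.
  elim: l => [|l IH] /=; first by rewrite p0 set11.
  by apply/bigcupP; exists (p l).
have p_step l := (succP _ _ (lvl_lang _ _ (p_lvl l))).2 _ (p_succ l).
have [L stable] : exists L, forall k, p (N + L + k)%N = p (N + L)%N.
  have [l|L stable] := rank_stabilizes (p := fun l => p (N + l)%N) (rank := rank).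
    rewrite addnS; have [at_p _ _] := p_step (N + l)%N.
    exact: rank_step (cert _) _ _ at_p.
  by exists L => k; rewrite -addnA stable.
have p_rej : p (N + L)%N \notin acc A.
  by apply/negP => p_acc; apply: (never_acc (N + L)%N); rewrite leq_addr.
apply: (@no_infinite_descent (fun k => progress (p (N + L)%N) (suffix pi (N + L + k)%N))).
move=> k; have [_ _] := p_step (N + L + k)%N; by rewrite -addnS !stable addnS; apply.
Qed.

Lemma certified_sound pi : eventually_periodic pi -> accepts A pi -> lang (q_in A) pi.
Proof.
move=> per [lvl [succ [run accepting]]]; have [lvl0 [lvlS sat]] := run.
have succ_lvl l q q' : q \in lvl l -> q' \in succ l q -> q' \in lvl l.+1.
  by move=> ql q'S; rewrite lvlS; apply/bigcupP; exists q.
suff lvl_lang n q l : (rank q < n)%N -> q \in lvl l -> lang q (suffix pi l).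
  by rewrite -[pi]suffix0; apply: (lvl_lang _ _ _ (ltnSn _)); rewrite lvl0 set11.
elim: n q l => // n IH q l rank_q ql.
have lower q' l' : q' \in lvl l' -> (rank q' < rank q)%N -> lang q' (suffix pi l').
  by move=> q'l' lt; apply: IH q'l'; apply: leq_trans lt rank_q.
have [rank_q_step _ rej accept] := cert q.
case: (boolP (q \in acc A)) => [q_acc|q_rej].
  apply: (accept q_acc _ (fun k => q \in lvl (l + k)%N)); rewrite ?addn0 //.
    exact: eventually_periodic_suffix.
  move=> k qlk; exists (succ (l + k)%N q); split; first exact: sat.
  move=> q' q'S at_q'; rewrite suffixD.
  have q'lvl : q' \in lvl (l + k.+1)%N by rewrite addnS; apply: succ_lvl qlk q'S.
  split=> [eq_q'|neq_q']; first by rewrite -eq_q'.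
  by have [//|lt] := rank_q_step _ _ at_q'; apply: lower.
have back j : q \in lvl j -> (q \in succ j q -> lang q (suffix pi j.+1)) ->
    lang q (suffix pi j).
  move=> qj loop; apply: (rej q_rej _ (succ j q)); first exact: eventually_periodic_suffix.
    by rewrite suffix_head; apply: sat.
  rewrite suffix_head => q' q'S at_q'; rewrite suffixS.
  have [eq_q'|lt] := rank_q_step _ _ at_q'; last exact: lower (succ_lvl _ _ _ qj q'S) lt.
  by rewrite eq_q' in q'S *; apply: loop.
have [k exit] := run_rejecting_loop_exits run accepting ql q_rej.
elim: k l ql exit => [|k IHk] l ql exit; apply: (back l ql) => loop.
  by rewrite addn0 loop in exit.
by apply: IHk; [exact: succ_lvl ql loop|rewrite addSnnS].
Qed.

Lemma certified_weak : weak A.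
Proof.
exists #|Q|, enum_rank, (fun i j => i = j \/ (rank (enum_val i) < rank (enum_val j))%N).
split; [by left|split; [|split; [|split]]].
- move=> i j [//|lt] [eq_ji|gt]; first by [].
  by have := ltn_trans lt gt; rewrite ltnn.
- move=> i j k [-> //|ij] [<-|jk]; right=> //.
  exact: ltn_trans ij jk.
- move=> i; case: (boolP (enum_val i \in acc A)) => i_acc; [left|right].
    by apply/fintype.subsetP => q; rewrite inE => /eqP q_i; rewrite -(enum_rankK q) q_i.
  apply/pred0P => q /=; rewrite inE; apply/negP => /andP [/eqP q_i].
  by rewrite -(enum_rankK q) q_i (negPf i_acc).
- move=> q s q' at_q'; rewrite !enum_rankK.
  by case: (rank_step (cert q) at_q') => [->|lt]; [left|right].
Qed.

End Certificate.

Section Embedding.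
Variables (AP Q Q' : finType) (A : aba {set AP} Q) (A' : aba {set AP} Q').
Variables (lang : Q -> computation AP -> Prop) (rank : Q -> nat).
Variable progress : Q -> computation AP -> nat.
Variables (lang' : Q' -> computation AP -> Prop) (rank' : Q' -> nat).
Variable progress' : Q' -> computation AP -> nat.
Variable f : Q -> Q'.
Hypotheses (f_inj : injective f)
  (delta_f : forall q s, delta A' (f q) s = pbf_map f (delta A q s))
  (acc_f : forall q, (f q \in acc A') = (q \in acc A))
  (lang_f : forall q, lang' (f q) = lang q)
  (rank_f : forall q, rank' (f q) = rank q)
  (progress_f : forall q, progress' (f q) = progress q).

Lemma certified_at_embed q : certified_at A lang rank progress q ->
  certified_at A' lang' rank' progress' (f q).
Proof.
case=> rank_q step rej accept; split.
- move=> s q'; rewrite delta_f => /pbf_atoms_mapP [x -> /rank_q].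
  by rewrite !rank_f => -[->|lt]; [left|right].
- rewrite lang_f => pi /step [S [sat S_lang]]; exists (f @: S); split.
    rewrite delta_f; apply/pbf_sat_map; apply: pbf_sat_subset sat.
    by apply/fintype.subsetP => x xS; rewrite inE imset_f.
  move=> _ /imsetP [x xS ->]; have [x_lang x_progress] := S_lang x xS.
  by rewrite lang_f acc_f progress_f; split=> // /f_inj.
- rewrite acc_f lang_f => q_rej pi S per; rewrite delta_f => /pbf_sat_map sat S_lang.
  apply: (rej q_rej pi _ per sat) => x; rewrite inE => xS at_x.
  by rewrite -lang_f; apply: S_lang xS (pbf_atoms_map f at_x).
- rewrite acc_f lang_f => q_acc pi X per X_step; apply: (accept q_acc pi X per).
  move=> l /X_step [S [+ S_ok]]; rewrite delta_f in S_ok *; move/pbf_sat_map => sat.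
  exists (f @^-1: S); split=> // x; rewrite inE => xS at_x.
  have [loop other] := S_ok _ xS (pbf_atoms_map f at_x).
  split=> [eq_x|neq]; first by apply: loop; rewrite eq_x.
  by rewrite -lang_f; apply: other => /f_inj.
Qed.

End Embedding.

Definition least_witness (P : nat -> Prop) : nat :=
  if pselect (exists n, `[< P n >]) is left ex then ex_minn ex else 0.

Lemma least_witnessP (P : nat -> Prop) n :
  P n -> P (least_witness P) /\ (least_witness P <= n)%N.
Proof.
move=> Pn; rewrite /least_witness; case: pselect => [ex|]; last first.
  by move=> no_ex; exfalso; apply: no_ex; exists n; apply/asboolP.
by case: ex_minnP => m /asboolP Pm m_min; split=> //; apply: m_min; apply/asboolP.
Qed.

Section Combination.
Variable AP : finType.
Local Notation letter := {set AP}.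
Local Notation word := (computation AP).

Definition case_sum (Q1 Q2 : Type) (T : Type) (f1 : Q1 -> T) (f2 : Q2 -> T)
  (q : Q1 + Q2) : T :=
  match q with inl q1 => f1 q1 | inr q2 => f2 q2 end.

Definition sum_aba (Q1 Q2 : finType) (A1 : aba letter Q1) (A2 : aba letter Q2) :
  aba letter (Q1 + Q2)%type :=
  ABA (inl (q_in A1))
    (case_sum (fun q1 s => pbf_map inl (delta A1 q1 s)) (fun q2 s => pbf_map inr (delta A2 q2 s)))
    [set q | case_sum (mem (acc A1)) (mem (acc A2)) q].

Lemma certified_sum (Q1 Q2 : finType) (A1 : aba letter Q1) (A2 : aba letter Q2)
    lang1 rank1 progress1 lang2 rank2 progress2 :
  certified A1 lang1 rank1 progress1 -> certified A2 lang2 rank2 progress2 ->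
  certified (sum_aba A1 A2) (case_sum lang1 lang2) (case_sum rank1 rank2)
    (case_sum progress1 progress2).
Proof.
move=> C1 C2 [q|q].
  by apply: certified_at_embed (C1 q) => // [|x]; [exact: inl_inj|rewrite inE].
by apply: certified_at_embed (C2 q) => // [|x]; [exact: inr_inj|rewrite inE].
Qed.

Section Root.
Variables (Q : finType) (A : aba letter Q) (lang : Q -> word -> Prop).
Variables (rank : Q -> nat) (progress : Q -> word -> nat).
Variables (root_delta : letter -> pbf (option Q)) (root_acc : bool).
Variables (root_lang : word -> Prop) (root_progress : word -> nat).

(* A fresh initial state [None] on top of [A]: every connective is implemented
   by such a root whose transitions refer to the initial states of the
   automata of its arguments. *)
Definition root_aba : aba letter (option Q) :=
  ABA None (fun q s => oapp (fun q0 => pbf_map Some (delta A q0 s)) (root_delta s) q)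
    [set q | oapp (mem (acc A)) root_acc q].

Definition root_rank : option Q -> nat := oapp rank (\max_q rank q).+1.

Lemma root_rank_step s q' : pbf_atoms (delta root_aba None s) q' ->
  q' = None \/ (root_rank q' < root_rank None)%N.
Proof. by case: q' => [q'|] _; [right; rewrite /= ltnS; apply: leq_bigmax|left]. Qed.

Hypothesis cert : certified A lang rank progress.

Lemma certified_root :
  certified_at root_aba (oapp lang root_lang) root_rank (oapp progress root_progress) None ->
  certified root_aba (oapp lang root_lang) root_rank (oapp progress root_progress).
Proof.
move=> root_cert [q|//].
by apply: certified_at_embed (cert q) => // [|x]; [exact: Some_inj|rewrite inE].
Qed.

Lemma root_child_step q pi : lang q pi ->
  exists S, pbf_sat S (pbf_map Some (delta A q (pi 0%N))) /\
    forall q', q' \in S -> q' <> None /\ oapp lang root_lang q' (suffix pi 1).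
Proof.
case/(lang_step (cert q)) => S [sat S_lang]; exists (Some @: S); split.
  apply/pbf_sat_map; apply: pbf_sat_subset sat.
  by apply/fintype.subsetP => x xS; rewrite inE imset_f.
by move=> _ /imsetP [x xS ->]; have [] := S_lang x xS.
Qed.

Lemma root_child_back q pi l S : eventually_periodic pi ->
  pbf_sat S (pbf_map Some (delta A q (pi l))) ->
  (forall q', q' \in S -> pbf_atoms (pbf_map Some (delta A q (pi l))) q' ->
     oapp lang root_lang q' (suffix pi l.+1)) ->
  lang q (suffix pi l).
Proof.
move=> per /pbf_sat_map sat S_lang.
apply: (certified_back cert (S := Some @^-1: S)); first exact: eventually_periodic_suffix.
  by rewrite suffix_head.
rewrite suffix_head suffixS => x; rewrite inE => xS at_x.
exact: (S_lang _ xS (pbf_atoms_map Some at_x)).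
Qed.

End Root.

Definition recognizable (L : word -> Prop) : Prop :=
  exists (Q : finType) (A : aba letter Q) (lang : Q -> word -> Prop) (rank : Q -> nat)
    (progress : Q -> word -> nat),
    certified A lang rank progress /\ forall pi, lang (q_in A) pi <-> L pi.

Lemma recognizable_root (Q : finType) (A : aba letter Q) lang rank progress
    root_delta root_acc root_lang root_progress (L : word -> Prop) :
  certified A lang rank progress ->
  certified_at (root_aba A root_delta root_acc) (oapp lang root_lang) (root_rank rank)
    (oapp progress root_progress) None ->
  (forall pi, root_lang pi <-> L pi) -> recognizable L.
Proof.
move=> cert root_cert root_L.
exists _, (root_aba A root_delta root_acc), (oapp lang root_lang), (root_rank rank).
by exists (oapp progress root_progress); split; first exact: certified_root.
Qed.

Definition letter_aba (P : letter -> Prop) : aba letter unit :=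
  ABA tt (fun _ s => if `[< P s >] then PTrue _ else PFalse _) finset.set0.

Lemma recognizable_letter (P : letter -> Prop) : recognizable (fun pi => P (pi 0%N)).
Proof.
exists _, (letter_aba P), (fun _ pi => P (pi 0%N)), (fun _ => 0%N), (fun _ _ => 0%N).
split=> // q; split=> /= [s q'|pi P0|_ pi S _|]; rewrite ?inE //.
- by case: ifP.
- by exists finset.set0; split=> [|q']; [case: asboolP|rewrite inE].
- by case: asboolP.
Qed.

Lemma recognizable_next L : recognizable L -> recognizable (fun pi => L (suffix pi 1)).
Proof.
case=> [Q1 [A1 [lang1 [r1 [p1 [C1 E1]]]]]].
pose Lr pi := lang1 (q_in A1) (suffix pi 1).
apply: (recognizable_root (root_acc := false) (root_progress := fun _ => 0%N) C1
  (root_delta := fun _ => PAtom (Some (q_in A1))) (root_lang := Lr)); last first.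
  by move=> pi; rewrite /Lr E1.
split=> [s q'|pi Lr_pi|_ pi S per sat S_lang|]; rewrite ?inE //; first exact: root_rank_step.
  exists [set Some (q_in A1)]; split=> [|q']; first by rewrite /= inE.
  by rewrite inE => /eqP ->.
exact: S_lang sat _.
Qed.

Section Connectives.
Variables (L1 L2 : word -> Prop).
Hypotheses (rec1 : recognizable L1) (rec2 : recognizable L2).

Lemma recognizable_or : recognizable (fun pi => L1 pi \/ L2 pi).
Proof.
case: rec1 rec2 => [Q1 [A1 [lang1 [r1 [p1 [C1 E1]]]]]] [Q2 [A2 [lang2 [r2 [p2 [C2 E2]]]]]].
have C := certified_sum C1 C2; set A := sum_aba A1 A2 in C.
pose child q s := pbf_map Some (delta A q s).
pose Lr pi := lang1 (q_in A1) pi \/ lang2 (q_in A2) pi.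
apply: (recognizable_root (root_acc := false) (root_progress := fun _ => 0%N) C
  (root_delta := fun s => POr (child (inl (q_in A1)) s) (child (inr (q_in A2)) s))
  (root_lang := Lr)); last by move=> pi; rewrite /Lr E1 E2.
split=> [s q'|pi|_ pi S per|]; rewrite ?inE //; first exact: root_rank_step.
  case=> [/(root_child_step Lr C (q := inl _))|/(root_child_step Lr C (q := inr _))];
  move=> [S [sat S_ok]]; exists S; (split; last by move=> q' /S_ok []); [by left|by right].
case=> sat S_lang; [left|right]; rewrite -(suffix0 pi).
- apply: (root_child_back (q := inl _) C per sat) => q' q'S at_q'.
  by apply: S_lang => //; left.
- apply: (root_child_back (q := inr _) C per sat) => q' q'S at_q'.
  by apply: S_lang => //; right.
Qed.

Lemma recognizable_and : recognizable (fun pi => L1 pi /\ L2 pi).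
Proof.
case: rec1 rec2 => [Q1 [A1 [lang1 [r1 [p1 [C1 E1]]]]]] [Q2 [A2 [lang2 [r2 [p2 [C2 E2]]]]]].
have C := certified_sum C1 C2; set A := sum_aba A1 A2 in C.
pose child q s := pbf_map Some (delta A q s).
pose Lr pi := lang1 (q_in A1) pi /\ lang2 (q_in A2) pi.
apply: (recognizable_root (root_acc := false) (root_progress := fun _ => 0%N) C
  (root_delta := fun s => PAnd (child (inl (q_in A1)) s) (child (inr (q_in A2)) s))
  (root_lang := Lr)); last by move=> pi; rewrite /Lr E1 E2.
split=> [s q'|pi|_ pi S per|]; rewrite ?inE //; first exact: root_rank_step.
  case=> /(root_child_step Lr C (q := inl _)) [S1 [sat1 S1_ok]].
  move=> /(root_child_step Lr C (q := inr _)) [S2 [sat2 S2_ok]].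
  exists (S1 :|: S2); split.
    by split; [apply: pbf_sat_subset sat1|apply: pbf_sat_subset sat2];
      [exact: finset.subsetUl|exact: finset.subsetUr].
  by move=> q' /setUP [/S1_ok|/S2_ok] [].
case=> sat1 sat2 S_lang; rewrite -(suffix0 pi); split.
- apply: (root_child_back (q := inl _) C per sat1) => q' q'S at_q'.
  by apply: S_lang => //; left.
- apply: (root_child_back (q := inr _) C per sat2) => q' q'S at_q'.
  by apply: S_lang => //; right.
Qed.

Lemma recognizable_until :
  recognizable (fun pi => exists i, L2 (suffix pi i) /\ forall j, (j < i)%N -> L1 (suffix pi j)).
Proof.
case: rec1 rec2 => [Q1 [A1 [lang1 [r1 [p1 [C1 E1]]]]]] [Q2 [A2 [lang2 [r2 [p2 [C2 E2]]]]]].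
have C := certified_sum C1 C2; set A := sum_aba A1 A2 in C.
pose child q s := pbf_map Some (delta A q s).
pose W pi i :=
  lang2 (q_in A2) (suffix pi i) /\ forall j, (j < i)%N -> lang1 (q_in A1) (suffix pi j).
pose Lr pi := exists i, W pi i.
apply: (recognizable_root (root_acc := false) (root_progress := fun pi => least_witness (W pi)) C
  (root_delta := fun s =>
     POr (child (inr (q_in A2)) s) (PAnd (child (inl (q_in A1)) s) (PAtom None)))
  (root_lang := Lr)); last first.
  by move=> pi; split=> -[i [now before]]; exists i; split=> [|j /before /E1 //]; apply/E2.
split=> [s q'|pi [i Wi]|_ pi S per|]; rewrite ?inE //; first exact: root_rank_step.
  have [[] + + _] := least_witnessP Wi; case k_def: (least_witness (W pi)) => [|k] now before.
    rewrite suffix0 in now; have [S [sat S_ok]] := root_child_step Lr C (q := inr _) now.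
    by exists S; split; [left|move=> q' /S_ok []].
  have := before 0%N erefl; rewrite suffix0 => /(root_child_step Lr C (q := inl _)) [S [sat S_ok]].
  have W1k : W (suffix pi 1) k by split=> [|j jk]; rewrite suffixD add1n //; apply: before.
  exists (None |: S); split.
    by right; split; [apply: pbf_sat_subset sat; exact: subsetU1|rewrite /= setU11].
  move=> q' /setU1P [->|/S_ok [] //]; split; first by exists k.
  by move=> _ _ /=; rewrite k_def ltnS; have [] := least_witnessP W1k.
case=> [sat|[sat None_S]] S_lang.
  exists 0%N; split=> //; apply: (root_child_back (q := inr _) C per sat) => q' q'S at_q'.
  by apply: S_lang => //; left.
have [k [now before]] : Lr (suffix pi 1) by apply: S_lang None_S _; right; right.
exists k.+1; split=> [|[|j] jk]; first by rewrite suffixD add1n in now.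
  apply: (root_child_back (q := inl _) C per sat) => q' q'S at_q'.
  by apply: S_lang => //; right; left.
by have := before j jk; rewrite suffixD add1n.
Qed.

Lemma recognizable_release : recognizable (fun pi =>
  forall i, L2 (suffix pi i) \/ exists2 j, (j < i)%N & L1 (suffix pi j)).
Proof.
case: rec1 rec2 => [Q1 [A1 [lang1 [r1 [p1 [C1 E1]]]]]] [Q2 [A2 [lang2 [r2 [p2 [C2 E2]]]]]].
have C := certified_sum C1 C2; set A := sum_aba A1 A2 in C.
pose child q s := pbf_map Some (delta A q s).
pose Lr pi := forall i, lang2 (q_in A2) (suffix pi i) \/
  exists2 j, (j < i)%N & lang1 (q_in A1) (suffix pi j).
apply: (recognizable_root (root_acc := true) (root_progress := fun _ => 0%N) C
  (root_delta := fun s =>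
     PAnd (child (inr (q_in A2)) s) (POr (child (inl (q_in A1)) s) (PAtom None)))
  (root_lang := Lr)); last first.
  by move=> pi; split=> Lpi i; case: (Lpi i) => [/E2|[j ji /E1]]; by [left|right; exists j].
split=> [s q'|pi Lr_pi||_ pi X per X_step X0]; rewrite ?inE //; first exact: root_rank_step.
  have := Lr_pi 0%N; rewrite suffix0 => -[|[] //].
  move=> /(root_child_step Lr C (q := inr _)) [S2 [sat2 S2_ok]].
  case: (pselect (lang1 (q_in A1) pi)) => [now1|not_now1].
    have [S1 [sat1 S1_ok]] := root_child_step Lr C (q := inl _) now1.
    exists (S2 :|: S1); split.
      by split; [apply: pbf_sat_subset sat2|left; apply: pbf_sat_subset sat1];
        [exact: finset.subsetUl|exact: finset.subsetUr].
    by move=> q' /setUP [/S2_ok|/S1_ok] [].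
  exists (None |: S2); split.
    by split; [apply: pbf_sat_subset sat2; exact: subsetU1|right; rewrite /= setU11].
  move=> q' /setU1P [->|/S2_ok [] //]; split=> // i.
  case: (Lr_pi i.+1) => [|[[|j] ji earlier]]; rewrite ?suffixD ?add1n.
  - by left.
  - by rewrite suffix0 in earlier.
  - by right; exists j; rewrite // suffixD add1n.
have now_or_X i : (exists2 j, (j < i)%N & lang1 (q_in A1) (suffix pi j)) \/ X i.
  elim: i => [|i [[j ji earlier]|Xi]]; [by right|by left; exists j => //; apply: ltnW|].
  have [S [[_ [sat1|None_S]] S_ok]] := X_step i Xi; last first.
    by right; apply: (S_ok None None_S (or_intror (or_intror erefl))).1.
  left; exists i => //; apply: (root_child_back (q := inl _) C per sat1) => q' q'S at_q'.
  have [_ lang_q'] := S_ok q' q'S (or_intror (or_introl at_q')).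
  by apply: lang_q' => eq_q'; move: at_q'; rewrite eq_q' => /pbf_atoms_mapP [].
move=> i; case: (now_or_X i) => [earlier|Xi]; [by right|left].
have [S [[sat2 _] S_ok]] := X_step i Xi.
apply: (root_child_back (q := inr _) C per sat2) => q' q'S at_q'.
have [_ lang_q'] := S_ok q' q'S (or_introl at_q').
by apply: lang_q' => eq_q'; move: at_q'; rewrite eq_q' => /pbf_atoms_mapP [].
Qed.

End Connectives.

End Combination.

Section LassoRecognizable.
Variable AP : finType.
Local Notation word := (computation AP).

Definition lasso_recognizable (L : word -> Prop) : Prop :=
  exists L', [/\ recognizable L', forall pi, L pi -> L' pi &
    forall pi, eventually_periodic pi -> L' pi -> L pi].

Lemma lasso_recognizable_ext (L M : word -> Prop) : lasso_recognizable L ->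
  (forall pi, M pi -> L pi) -> (forall pi, eventually_periodic pi -> L pi -> M pi) ->
  lasso_recognizable M.
Proof.
case=> L' [rec sub sup] ML LM; exists L'; split=> // [pi /ML /sub //|pi per].
by move=> /(sup _ per) /(LM _ per).
Qed.

Lemma lasso_recognizable_letter (P : {set AP} -> Prop) :
  lasso_recognizable (fun pi => P (pi 0%N)).
Proof. by exists (fun pi => P (pi 0%N)); split=> //; apply: recognizable_letter. Qed.

Lemma lasso_recognizable_const (P : Prop) : lasso_recognizable (fun _ => P).
Proof. exact: (lasso_recognizable_letter (fun _ => P)). Qed.

Section Connectives.
Variables (L1 L2 : word -> Prop).
Hypotheses (rec1 : lasso_recognizable L1) (rec2 : lasso_recognizable L2).

Lemma lasso_recognizable_or : lasso_recognizable (fun pi => L1 pi \/ L2 pi).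
Proof.
case: rec1 rec2 => [L1' [R1 sub1 sup1]] [L2' [R2 sub2 sup2]].
exists (fun pi => L1' pi \/ L2' pi); split; first exact: recognizable_or.
  by move=> pi [/sub1|/sub2]; [left|right].
by move=> pi per [/(sup1 _ per)|/(sup2 _ per)]; [left|right].
Qed.

Lemma lasso_recognizable_and : lasso_recognizable (fun pi => L1 pi /\ L2 pi).
Proof.
case: rec1 rec2 => [L1' [R1 sub1 sup1]] [L2' [R2 sub2 sup2]].
exists (fun pi => L1' pi /\ L2' pi); split; first exact: recognizable_and.
  by move=> pi [/sub1 ? /sub2 ?].
by move=> pi per [/(sup1 _ per) ? /(sup2 _ per) ?].
Qed.

Lemma lasso_recognizable_until : lasso_recognizable (fun pi =>
  exists i, L2 (suffix pi i) /\ forall j, (j < i)%N -> L1 (suffix pi j)).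
Proof.
case: rec1 rec2 => [L1' [R1 sub1 sup1]] [L2' [R2 sub2 sup2]].
exists (fun pi => exists i, L2' (suffix pi i) /\ forall j, (j < i)%N -> L1' (suffix pi j)).
split; first exact: recognizable_until.
  by move=> pi [i [now before]]; exists i; split=> [|j /before]; [apply: sub2|apply: sub1].
move=> pi per [i [now before]]; have per_sfx k := eventually_periodic_suffix k per.
by exists i; split=> [|j /before]; [apply: sup2 now|apply: sup1].
Qed.

Lemma lasso_recognizable_release : lasso_recognizable (fun pi =>
  forall i, L2 (suffix pi i) \/ exists2 j, (j < i)%N & L1 (suffix pi j)).
Proof.
case: rec1 rec2 => [L1' [R1 sub1 sup1]] [L2' [R2 sub2 sup2]].
exists (fun pi => forall i, L2' (suffix pi i) \/ exists2 j, (j < i)%N & L1' (suffix pi j)).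
split; first exact: recognizable_release.
  by move=> pi Lpi i; case: (Lpi i) => [/sub2|[j ji /sub1]]; [left|right; exists j].
move=> pi per Lpi i; have per_sfx k := eventually_periodic_suffix k per.
by case: (Lpi i) => [/(sup2 _ (per_sfx i))|[j ji /(sup1 _ (per_sfx j))]]; [left|right; exists j].
Qed.

End Connectives.

Lemma lasso_recognizable_next (L : word -> Prop) :
  lasso_recognizable L -> lasso_recognizable (fun pi => L (suffix pi 1)).
Proof.
case=> L' [R sub sup]; exists (fun pi => L' (suffix pi 1)); split=> [||pi per].
- exact: recognizable_next.
- by move=> pi /sub.
- by apply: sup; apply: eventually_periodic_suffix.
Qed.

Lemma lasso_recognizable_suffix (L : word -> Prop) k :
  lasso_recognizable L -> lasso_recognizable (fun pi => L (suffix pi k)).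
Proof.
elim: k L => [|k IH] L rec.
  by apply: lasso_recognizable_ext rec _ _ => pi; rewrite suffix0.
by apply: lasso_recognizable_ext (IH _ (lasso_recognizable_next rec)) _ _ => pi;
  rewrite suffixD addn1.
Qed.

Lemma lasso_recognizable_exists_lt n (L : nat -> word -> Prop) :
  (forall i, (i < n)%N -> lasso_recognizable (L i)) ->
  lasso_recognizable (fun pi => exists2 i, (i < n)%N & L i pi).
Proof.
elim: n => [|n IH] rec.
  by apply: lasso_recognizable_ext (lasso_recognizable_const False) _ _ => pi [].
have rec_or := lasso_recognizable_or (IH (fun i lt => rec i (ltnW lt))) (rec n (ltnSn n)).
apply: lasso_recognizable_ext rec_or _ _ => pi.
  by case=> i; rewrite ltnS leq_eqVlt => /orP [/eqP ->|lt Li]; [right|left; exists i].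
by move=> _ [[i lt Li]|Ln]; [exists i => //; apply: ltnW|exists n].
Qed.

Lemma lasso_recognizable_forall_lt n (L : nat -> word -> Prop) :
  (forall i, (i < n)%N -> lasso_recognizable (L i)) ->
  lasso_recognizable (fun pi => forall i, (i < n)%N -> L i pi).
Proof.
elim: n => [|n IH] rec.
  by apply: lasso_recognizable_ext (lasso_recognizable_const True) _ _.
have rec_and := lasso_recognizable_and (IH (fun i lt => rec i (ltnW lt))) (rec n (ltnSn n)).
apply: lasso_recognizable_ext rec_and _ _ => pi.
  by move=> Lpi; split=> [i lt|]; apply: Lpi => //; apply: ltnW.
by move=> _ [Llt Ln] i; rewrite ltnS leq_eqVlt => /orP [/eqP ->|]; [|apply: Llt].
Qed.

End LassoRecognizable.

Local Open Scope ring_scope.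

Section Until.
Variable R : realType.
Implicit Types (F G t : nat -> R) (v : R).

Lemma minj0 F : minj 0 F = 1.
Proof. by rewrite /minj big_ord0. Qed.

Lemma minjS i F : minj i.+1 F = Order.min (minj i F) (F i).
Proof.
have recl k G : minj k.+1 G = Order.min (G 0%N) (minj k (fun j => G j.+1)).
  by rewrite /minj big_ord_recl.
elim: i F => [|i IH] F; first by rewrite recl /minj !big_ord0 minC.
by rewrite recl IH recl minA.
Qed.

Lemma minjD i k F : minj (i + k) F <= minj i F.
Proof. by elim: k => [|k IH]; rewrite ?addn0 // addnS minjS ge_min IH. Qed.

Lemma lt_minj v i F : v < minj i F <-> v < 1 /\ forall j, (j < i)%N -> v < F j.
Proof.
elim: i => [|i IH]; first by rewrite minj0; split=> [|[]].
rewrite minjS lt_min; split.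
  case/andP=> /IH [v1 before] now; split=> // j; rewrite ltnS leq_eqVlt.
  by case/orP=> [/eqP ->|]; last exact: before.
case=> v1 before; rewrite before // andbT; apply/IH; split=> // j ji.
by apply: before; apply: ltn_trans ji _.
Qed.

Lemma minj_lt v i F : minj i F < v <-> 1 < v \/ exists2 j, (j < i)%N & F j < v.
Proof.
elim: i => [|i IH]; first by rewrite minj0; split=> [|[|[]]] //; left.
rewrite minjS gt_min; split.
  case/orP=> [/IH [|[j ji Fj]]|Fi]; [by left|right; exists j => //; exact: ltnW|].
  by right; exists i.
case=> [v1|[j]]; first by apply/orP; left; apply/IH; left.
rewrite ltnS leq_eqVlt => /orP [/eqP ->|ji] Fj; apply/orP; [by right|left].
by apply/IH; right; exists j.
Qed.

Lemma sup_range_ub t (M : R) i : (forall k, t k <= M) -> t i <= sup (range t).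
Proof. by move=> bnd; apply: ub_le_sup; [exists M => _ [k _ <-]|exists i]. Qed.

Lemma sup_range_lt t (M : R) v : (forall k, t k <= M) -> M < v -> sup (range t) < v.
Proof.
move=> bnd Mv; apply: le_lt_trans Mv; apply: ge_sup; first by exists (t 0%N), 0%N.
by move=> _ [k _ <-].
Qed.

Lemma finite_max_lt t v K : (forall i, (i < K)%N -> t i < v) ->
  exists2 M, M < v & forall i, (i < K)%N -> t i <= M.
Proof.
elim: K => [|K IH] t_lt; first by exists (v - 1) => //; lra.
have [M Mv M_ub] := IH (fun i iK => t_lt i (ltnW iK)).
exists (Num.max M (t K)); first by rewrite gt_max Mv t_lt.
move=> i; rewrite ltnS leq_eqVlt => /orP [/eqP ->|iK]; rewrite le_max ?lexx ?orbT //.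
by rewrite M_ub.
Qed.

Definition until_term F G (i : nat) : R := Order.min (G i) (minj i F).

Lemma until_term_le F G i : until_term F G i <= G i.
Proof. by rewrite ge_min lexx. Qed.

Lemma until_term_lt F G v i :
  G i < v \/ (exists2 j, (j < i)%N & F j < v) -> until_term F G i < v.
Proof. by rewrite gt_min => -[->//|ex]; apply/orP; right; apply/minj_lt; right. Qed.

Hypotheses (F G : nat -> R) (G_le1 : forall i, G i <= 1).

Lemma until_term_le1 i : until_term F G i <= 1.
Proof. exact: le_trans (until_term_le F G i) (G_le1 i). Qed.

Lemma lt_sup_until v : v < sup (range (until_term F G)) <->
  exists i, v < G i /\ forall j, (j < i)%N -> v < F j.
Proof.
split=> [|[i [now before]]].
  case/sup_gt => [|_ [i _ <-]]; first by exists (until_term F G 0%N), 0%N.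
  by rewrite lt_min => /andP [now /lt_minj [_ before]]; exists i.
apply: lt_le_trans (sup_range_ub i until_term_le1).
by rewrite lt_min now; apply/lt_minj; split=> //; apply: lt_le_trans now (G_le1 i).
Qed.

Lemma sup_until_lt v : sup (range (until_term F G)) < v ->
  forall i, G i < v \/ exists2 j, (j < i)%N & F j < v.
Proof.
move=> sup_v i; have := le_lt_trans (sup_range_ub i until_term_le1) sup_v.
rewrite gt_min => /orP [now|/minj_lt [v1|earlier]]; [by left|left|by right].
exact: le_lt_trans (G_le1 i) v1.
Qed.

End Until.

Lemma sup_until_in01 (R : realType) (F G : nat -> R) : (forall i, 0 <= G i <= 1) ->
  0 <= sup (range (until_term F G)) <= 1.
Proof.
move=> G01; have G_le1 i : G i <= 1 by case/andP: (G01 i).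
apply/andP; split.
  apply: le_trans (sup_range_ub 0 (until_term_le1 _ G_le1)).
  by rewrite le_min minj0 ler01 andbT; case/andP: (G01 0%N).
apply: ge_sup => [|_ [i _ <-]]; first by exists (until_term F G 0%N), 0%N.
exact: until_term_le1.
Qed.

Section Discounting.
Variables (R : realType) (eta : nat -> R).
Hypothesis eta_disc : discounting eta.

Lemma discounting_gt0 i : 0 < eta i.
Proof.
have [eta01 [eta_lt _]] := eta_disc; have /andP [eta_ge0 _] := eta01 i.+1.
exact: le_lt_trans eta_ge0 (eta_lt i i.+1 (ltnSn i)).
Qed.

Lemma discounting_le1 i : eta i <= 1.
Proof. by have [/(_ i) /andP []] := eta_disc. Qed.

Lemma discountingW i j : (i <= j)%N -> eta j <= eta i.
Proof.
have [_ [eta_lt _]] := eta_disc; rewrite leq_eqVlt => /orP [/eqP ->//|lt].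
exact: ltW (eta_lt _ _ lt).
Qed.

Lemma discounting_eventually_lt v : 0 < v -> exists N, forall i, (N <= i)%N -> eta i < v.
Proof.
have [_ [_ eta_cvg]] := eta_disc; move=> /eta_cvg [N etaN_lt]; exists N => i Ni.
apply: le_lt_trans (discountingW Ni) _.
by have := etaN_lt N (leqnn N); rewrite ger0_norm // ltW // discounting_gt0.
Qed.

End Discounting.

Section UntilLanguages.
Variables (R : realType) (AP : finType).
Local Notation word := (computation AP).

Definition until_value (F G : word -> R) (pi : word) : R :=
  sup (range (until_term (fun j => F (suffix pi j)) (fun i => G (suffix pi i)))).

Definition until_disc_value (eta : nat -> R) (F G : word -> R) (pi : word) : R :=
  sup (range (until_term (fun j => eta j * F (suffix pi j)) (fun i => eta i * G (suffix pi i)))).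

Variables (F G : word -> R).
Hypothesis G01 : forall pi, 0 <= G pi <= 1.
Hypotheses (F_gt : forall v, lasso_recognizable (fun pi => v < F pi))
  (F_lt : forall v, lasso_recognizable (fun pi => F pi < v))
  (G_gt : forall v, lasso_recognizable (fun pi => v < G pi))
  (G_lt : forall v, lasso_recognizable (fun pi => G pi < v)).

Let G_le1 pi : G pi <= 1. Proof. by case/andP: (G01 pi). Qed.

Lemma lasso_recognizable_until_gt v : lasso_recognizable (fun pi => v < until_value F G pi).
Proof.
apply: lasso_recognizable_ext (lasso_recognizable_until (F_gt v) (G_gt v)) _ _ => pi.
  by case/lt_sup_until => // i [now before]; exists i.
by move=> _ [i [now before]]; apply/lt_sup_until => //; exists i.
Qed.

Lemma lasso_recognizable_until_lt v : lasso_recognizable (fun pi => until_value F G pi < v).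
Proof.
apply: lasso_recognizable_ext (lasso_recognizable_release (F_lt v) (G_lt v)) _ _ => pi.
  exact: sup_until_lt.
move=> per release; have [K K_suffixes] := eventually_periodic_suffixes per.
rewrite /until_value; set t := until_term _ _.
have [|M Mv M_ub] := finite_max_lt (t := t) (v := v) (K := K).
  by move=> i _; apply: until_term_lt; apply: release.
apply: (sup_range_lt (M := M)) Mv => i; have [i' [i'K i'i eq_sfx]] := K_suffixes i.
apply: le_trans (M_ub i' i'K); rewrite /t /until_term eq_sfx le_min ge_min lexx /=.
by rewrite -(subnKC i'i) ge_min minjD orbT.
Qed.

Variable eta : nat -> R.
Hypothesis eta_disc : discounting eta.

Let etaG_le1 pi i : eta i * G (suffix pi i) <= 1.
Proof.
apply: le_trans (discounting_le1 eta_disc i); apply: ler_piMr (G_le1 _).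
exact: ltW (discounting_gt0 eta_disc i).
Qed.

Let until_disc_value_ge0 pi : 0 <= until_disc_value eta F G pi.
Proof.
rewrite /until_disc_value; apply: le_trans (sup_range_ub 0 (until_term_le1 _ (etaG_le1 pi))).
rewrite le_min minj0 ler01 andbT mulr_ge0 //; first exact: ltW (discounting_gt0 eta_disc 0).
by case/andP: (G01 (suffix pi 0)).
Qed.

Lemma lasso_recognizable_until_disc_gt v :
  lasso_recognizable (fun pi => v < until_disc_value eta F G pi).
Proof.
have eta_gt0 := discounting_gt0 eta_disc.
have [v_lt0|v_gt0|->] := ltgtP v 0.
- apply: lasso_recognizable_ext (@lasso_recognizable_const AP True) _ _ => // pi _ _.
  exact: lt_le_trans v_lt0 (until_disc_value_ge0 pi).
- have [N etaN] := discounting_eventually_lt eta_disc v_gt0.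
  pose L i pi := (eta i)^-1 * v < G (suffix pi i) /\
    forall j, (j < i)%N -> (eta j)^-1 * v < F (suffix pi j).
  have rec_L i : (i < N)%N -> lasso_recognizable (L i).
    move=> _; apply: lasso_recognizable_and; first exact: lasso_recognizable_suffix i (G_gt _).
    apply: lasso_recognizable_forall_lt => j _.
    exact: lasso_recognizable_suffix j (F_gt _).
  apply: lasso_recognizable_ext (lasso_recognizable_exists_lt rec_L) _ _ => pi.
    case/(lt_sup_until _ (etaG_le1 pi)) => i [now before]; exists i.
      rewrite ltnNge; apply/negP => /etaN etai_v; move: now; apply/negP; rewrite -leNgt.
      by apply: le_trans (ltW etai_v); apply: ler_piMr (G_le1 _); apply: ltW.
    by split=> [|j /before]; rewrite ltr_pdivrMl.
  move=> _ [i _ [now before]]; apply/(lt_sup_until _ (etaG_le1 pi)); exists i.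
  by split=> [|j /before]; rewrite -ltr_pdivrMl.
- apply: lasso_recognizable_ext (lasso_recognizable_until (F_gt 0) (G_gt 0)) _ _ => pi.
    case/(lt_sup_until _ (etaG_le1 pi)) => i [now before]; exists i.
    by split=> [|j /before]; rewrite ?pmulr_rgt0 // -(pmulr_rgt0 _ (eta_gt0 i)).
  move=> _ [i [now before]]; apply/(lt_sup_until _ (etaG_le1 pi)); exists i.
  by split=> [|j /before]; rewrite pmulr_rgt0.
Qed.

Lemma lasso_recognizable_until_disc_lt v :
  lasso_recognizable (fun pi => until_disc_value eta F G pi < v).
Proof.
have eta_gt0 := discounting_gt0 eta_disc.
have [v_le0|v_gt0] := lerP v 0.
  apply: lasso_recognizable_ext (@lasso_recognizable_const AP False) _ _ => // pi.
  by move/lt_le_trans/(_ v_le0); rewrite ltNge until_disc_value_ge0.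
have [N etaN] := discounting_eventually_lt eta_disc v_gt0.
pose L i pi := G (suffix pi i) < (eta i)^-1 * v \/
  exists2 j, (j < i)%N & F (suffix pi j) < (eta j)^-1 * v.
have rec_L i : (i < N)%N -> lasso_recognizable (L i).
  move=> _; apply: lasso_recognizable_or; first exact: lasso_recognizable_suffix i (G_lt _).
  apply: lasso_recognizable_exists_lt => j _.
  exact: lasso_recognizable_suffix j (F_lt _).
apply: lasso_recognizable_ext (lasso_recognizable_forall_lt rec_L) _ _ => pi.
  move=> /(sup_until_lt (etaG_le1 pi)) release i _.
  by case: (release i) => [now|[j ji earlier]]; [left|right; exists j];
    rewrite // ltr_pdivlMl.
move=> _ release; rewrite /until_disc_value; set t := until_term _ _.
have [|M Mv M_ub] := finite_max_lt (t := t) (v := v) (K := N).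
  move=> i iN; apply: until_term_lt.
  by case: (release i iN) => [now|[j ji earlier]]; [left|right; exists j];
    rewrite // -ltr_pdivlMl.
apply: (sup_range_lt (M := Num.max M (eta N))); last by rewrite gt_max Mv etaN.
move=> i; rewrite le_max; case: (ltnP i N) => [/M_ub -> //|Ni]; apply/orP; right.
apply: le_trans (until_term_le _ _ _) _; apply: le_trans (discountingW eta_disc Ni).
by apply: ler_piMr (G_le1 _); apply: ltW.
Qed.

End UntilLanguages.

Section Values.
Variables (R : realType) (AP : finType) (D : set (nat -> R)).
Hypothesis D_disc : forall eta, D eta -> discounting eta.

Lemma value_in01 (phi : ltl R AP) : in_disc D phi -> forall pi, 0 <= value phi pi <= 1.
Proof.
elim: phi => /= [_ _|p _ pi|f IH f_in pi|f IHf g IHg [f_in g_in] pi|f IH f_in pi|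
  f IHf g IHg [f_in g_in] pi|eta f IHf g IHg [eta_in [f_in g_in]] pi].
- by rewrite ler01 lexx.
- by case: ifP; rewrite ler01 lexx.
- by have := IH f_in pi; case/andP => *; apply/andP; split; lra.
- have /andP [f0 f1] := IHf f_in pi; have /andP [g0 g1] := IHg g_in pi.
  by rewrite le_max f0 ge_max f1 g1.
- exact: IH.
- by apply: sup_until_in01 => i; apply: IHg.
- apply: sup_until_in01 => i; have /andP [g0 g1] := IHg g_in (suffix pi i).
  have eta_disc := D_disc eta_in; have eta_gt0 := discounting_gt0 eta_disc i.
  rewrite mulr_ge0 ?(ltW eta_gt0) //=; apply: le_trans (discounting_le1 eta_disc i).
  exact: ler_piMr (ltW eta_gt0) g1.
Qed.

Lemma lasso_recognizable_value (phi : ltl R AP) : in_disc D phi -> forall v,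
  lasso_recognizable (fun pi => v < value phi pi) /\
  lasso_recognizable (fun pi => value phi pi < v).
Proof.
elim: phi => /= [_ v|p _ v|f IH f_in v|f IHf g IHg [f_in g_in] v|
  f IH f_in v|f IHf g IHg [f_in g_in] v|eta f IHf g IHg [eta_in [f_in g_in]] v].
- by split; apply: lasso_recognizable_const.
- split; first exact: lasso_recognizable_letter (fun s => v < if p \in s then 1 else 0).
  exact: lasso_recognizable_letter (fun s => (if p \in s then 1 else 0) < v).
- have [gt lt] := IH f_in (1 - v).
  by split; [apply: lasso_recognizable_ext lt _ _|apply: lasso_recognizable_ext gt _ _] => pi;
    rewrite ?ltrBrDl ?ltrBlDr ?ltrBrDr ?ltrBlDl => *; lra.
- have [gtf ltf] := IHf f_in v; have [gtg ltg] := IHg g_in v.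
  split.
    apply: (lasso_recognizable_ext (lasso_recognizable_or gtf gtg)) => pi.
      by rewrite lt_max => /orP.
    by move=> _; rewrite lt_max => -[] ->; rewrite ?orbT.
  apply: (lasso_recognizable_ext (lasso_recognizable_and ltf ltg)) => pi.
    by rewrite gt_max => /andP.
  by move=> _ [f_lt g_lt]; rewrite gt_max f_lt g_lt.
- have [gt lt] := IH f_in v.
  by split; [exact: lasso_recognizable_next gt|exact: lasso_recognizable_next lt].
- have rec_f v' := IHf f_in v'; have rec_g v' := IHg g_in v'.
  split; [apply: (lasso_recognizable_until_gt (F := value f) (G := value g))|
          apply: (lasso_recognizable_until_lt (F := value f) (G := value g))];
    by [apply: value_in01|move=> v'; case: (rec_f v')|move=> v'; case: (rec_g v')].
- have rec_f v' := IHf f_in v'; have rec_g v' := IHg g_in v'.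
  have eta_disc := D_disc eta_in.
  split; [apply: (lasso_recognizable_until_disc_gt (F := value f) (G := value g) _ _ _ eta_disc)|
          apply: (lasso_recognizable_until_disc_lt (F := value f) (G := value g) _ _ _ eta_disc)];
    by [apply: value_in01|move=> v'; case: (rec_f v')|move=> v'; case: (rec_g v')].
Qed.

End Values.

Theorem theorem1 (R : realType) (AP : finType) (D : set (nat -> R))
  (HD : forall eta, D eta -> discounting eta)
  (phi : ltl R AP) (Hphi : in_disc D phi) (v : R) (Hv : 0 <= v <= 1) :
  exists (Q : finType) (A : aba {set AP} Q),
    weak A /\
    forall pi : computation AP,
      (v < value phi pi -> accepts A pi) /\
      (accepts A pi -> lasso pi -> v < value phi pi).
Proof.
have [L [[Q [A [lang [rank [progress [cert lang_in]]]]]] sub sup]] :=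
  (lasso_recognizable_value HD Hphi v).1.
exists Q, A; split; first exact: certified_weak cert.
move=> pi; split=> [/sub /lang_in /(certified_accepts cert) //|].
move=> acc_pi /lasso_eventually_periodic per.
by apply: (sup _ per); apply/lang_in; exact: certified_sound cert _ per acc_pi.
Qed.
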